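(* Let $R$ be a Noetherian ring of prime characteristic $p>0$, let $N\in\mathbb{N}$, and let $\{I_n\}_{n\in\mathbb{N}}$ be a collection of ideals of $R$ each generated by $N$ elements. Let $\mathcal{F}$ be a non-principal ultrafilter on $\mathbb{N}$. Then, as ideals of the ultrapower $R_\natural$, \[ \Big(\operatorname{ulim}_{n\to\mathcal{F}} I_n\Big)^F\subseteq \operatorname{ulim}_{n\to\mathcal{F}}\big(I_n^F\big). \]
   Context: A non-principal ultrafilter $\mathcal{F}$ on $\mathbb{N}$ is a collection of subsets of $\mathbb{N}$ not containing $\varnothing$, closed under supersets and finite intersections, containing $A$ or $\mathbb{N}\setminus A$ for every $A\subseteq\mathbb{N}$, and containing no finite set. The ultrapower $R_\natural$ is $\prod_{n\in\mathbb{N}}R$ modulo the relation $(a_n)\sim(b_n)$ iff $\{n\mid a_n=b_n\}\in\mathcal{F}$, with componentwise ring operations; the class of $(a_n)$ is written $\operatorname{ulim} a_n$. For ideals $I_n\subseteq R$, $\operatorname{ulim}_{n\to\mathcal{F}} I_n$ is the ideal of $R_\natural$ consisting of classes $\operatorname{ulim} a_n$ with $\{n\mid a_n\in I_n\}\in\mathcal{F}$. For an ideal $I$ of a ring $S$ of characteristic $p$, $I^{[p^e]}$ is the ideal generated by $\{r^{p^e}\mid r\in I\}$, and the Frobenius closure is $I^F=\{r\in S\mid r^{p^e}\in I^{[p^e]}\text{ for all } e\gg0\}$. *)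

From HB Require Import structures.
From mathcomp Require Import all_boot all_algebra.
From mathcomp Require Import boolp classical_sets functions.
Set Implicit Arguments.
Unset Strict Implicit.
Unset Printing Implicit Defensive.
Import GRing.Theory.
Local Open Scope ring_scope.
Local Open Scope quotient_scope.

Definition is_ideal (S : comNzRingType) (I : S -> Prop) : Prop :=
  I 0 /\ (forall x y, I x -> I y -> I (x + y)) /\ (forall a x, I x -> I (a * x)).

Definition ideal_span (S : comNzRingType) (A : S -> Prop) : S -> Prop :=
  fun x => exists s : seq (S * S),
    (forall pr, pr \in s -> A pr.2) /\ x = \sum_(pr <- s) pr.1 * pr.2.

Definition generated_by_N (S : comNzRingType) (N : nat) (I : S -> Prop) : Prop :=
  exists g : 'I_N -> S, forall r, I r <-> ideal_span (fun y => exists i, y = g i) r.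

Definition noetherian (S : comNzRingType) : Prop :=
  forall I : S -> Prop, is_ideal I ->
    exists s : seq S, forall r, I r <-> ideal_span (fun y => y \in s) r.

Definition frob_pow (S : comNzRingType) (I : S -> Prop) (q : nat) : S -> Prop :=
  ideal_span (fun y => exists r, I r /\ y = r ^+ q).

Definition frob_closure (S : comNzRingType) (p : nat) (I : S -> Prop) : S -> Prop :=
  fun r => exists e0 : nat, forall e : nat, (e0 <= e)%N -> frob_pow I (p ^ e) (r ^+ (p ^ e)).

Definition finite_natset (A : nat -> Prop) : Prop := exists m, forall n, A n -> (n < m)%N.

Record npuf := NPUF {
  uf_mem :> (nat -> Prop) -> Prop;
  uf_nonempty : ~ uf_mem (fun _ => False);
  uf_up : forall A B : nat -> Prop, uf_mem A -> (forall n, A n -> B n) -> uf_mem B;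
  uf_cap : forall A B : nat -> Prop, uf_mem A -> uf_mem B -> uf_mem (fun n => A n /\ B n);
  uf_ultra : forall A : nat -> Prop, uf_mem A \/ uf_mem (fun n => ~ A n);
  uf_nonprincipal : forall A : nat -> Prop, finite_natset A -> ~ uf_mem A
}.

Section Ultrapower.
Variables (R : comNzRingType) (F : npuf).

(* sequences equal to 0 F-almost everywhere: a ~ b iff a - b is in this ideal *)
Definition seqR : comNzRingType := GRing.ComNzRing.clone (nat -> R) _.

Definition nullseq : {pred seqR} := fun a => `[< F (fun n => a n = 0) >].

Lemma uf_full : F (fun _ => True).
Proof.
by case: (@uf_ultra F (fun _ => True)) => H; [|apply: (uf_up H)].
Qed.

Lemma nullseq_idealr : idealr_closed nullseq.
Proof.
split.
- apply/asboolP; apply: (uf_up uf_full) => n _; done.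
- apply/negP => /asboolP H; have H0 := @uf_nonempty F; apply: H0.
  apply: (uf_up H) => n /= h.
  have h1 : (1 : R) = 0 := h. by move: (oner_neq0 R); rewrite h1 eqxx.
- move=> a u v /asboolP Hu /asboolP Hv; apply/asboolP.
  apply: (uf_up (uf_cap Hu Hv)) => n [h1 h2] /=.
  have -> : (a * u + v) n = a n * u n + v n by []. by rewrite h1 h2 mulr0 addr0.
Qed.

HB.instance Definition _ := isIdealr.Build seqR nullseq nullseq_idealr.

Definition ultrapower : comNzRingType := {ideal_quot nullseq}.

Definition ulim (a : nat -> R) : ultrapower := \pi_ultrapower (a : seqR).

Definition ulim_ideal (I : nat -> R -> Prop) : ultrapower -> Prop :=
  fun x => exists a : nat -> R, x = ulim a /\ F (fun n => I n (a n)).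

End Ultrapower.

Arguments ultrapower R F : clear implicits.
Arguments ulim {R} F a.
Arguments ulim_ideal {R} F I x.

From HB Require Import structures.
From mathcomp Require Import all_boot all_algebra.
From mathcomp Require Import boolp classical_sets functions.
Set Implicit Arguments.
Unset Strict Implicit.
Unset Printing Implicit Defensive.
Import GRing.Theory.
Local Open Scope ring_scope.

(* If x^q lies in (ulim I_n)^[q] for one q = p^e, then, since a Frobenius
   power of an ultralimit is contained in the ultralimit of the Frobenius
   powers, x_n^q lies in I_n^[q] for F-almost all n; and in characteristic p
   the relation r^q in I^[q] propagates to every larger power of p, so these
   x_n lie in I_n^F. *)

Section IdealSpan.
Variables (S : comNzRingType) (A : S -> Prop).

Lemma ideal_span_is_ideal : is_ideal (ideal_span A).
Proof.
split; first by exists [::]; rewrite big_nil.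
split.
  move=> _ _ [s [As ->]] [t [At ->]]; exists (s ++ t); rewrite big_cat.
  by split=> // pr; rewrite mem_cat => /orP[/As|/At].
move=> a _ [s [As ->]]; exists [seq (a * pr.1, pr.2) | pr <- s].
split; first by move=> _ /mapP[pr /As Apr ->].
by rewrite big_map mulr_sumr; apply: eq_bigr => pr _; rewrite mulrA.
Qed.

Lemma ideal_span_sub x : A x -> ideal_span A x.
Proof.
move=> Ax; exists [:: (1, x)]; rewrite big_seq1 mul1r.
by split=> // pr; rewrite inE => /eqP->.
Qed.

Lemma ideal_span_min (J : S -> Prop) :
  is_ideal J -> (forall x, A x -> J x) -> forall x, ideal_span A x -> J x.
Proof.
move=> [J0 [JD JM]] AJ _ [s [As ->]].
elim: s As => [|pr s IHs] As; first by rewrite big_nil.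
rewrite big_cons; apply: JD; first by apply/JM/AJ/As; rewrite mem_head.
by apply: IHs => pr' s_pr'; apply: As; rewrite in_cons s_pr' orbT.
Qed.

End IdealSpan.

Section FrobeniusPowers.
Variables (S : comNzRingType) (p : nat) (I : S -> Prop).
Hypothesis pchar_p : p \in [pchar S].

Lemma frob_pow_pcharX q r : frob_pow I q r -> frob_pow I (q * p) (r ^+ p).
Proof.
have [J0 [JD JM]] :=
  @ideal_span_is_ideal _ (fun y => exists r, I r /\ y = r ^+ (q * p)).
apply: (@ideal_span_min _ _ (fun r => frob_pow I (q * p) (r ^+ p))).
- split; first by rewrite expr0n gtn_eqF ?prime_gt0 ?(pcharf_prime pchar_p).
  split=> [x y Jx Jy | a x Jx].
    by rewrite -!(pFrobenius_autE pchar_p) rmorphD; apply: JD.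
  by rewrite exprMn; apply: JM.
- by move=> _ [z [Iz ->]]; apply: ideal_span_sub; exists z; rewrite -exprM.
Qed.

Lemma frob_pow_pchar_expn e e' r :
  (e <= e')%N -> frob_pow I (p ^ e) (r ^+ (p ^ e)) ->
  frob_pow I (p ^ e') (r ^+ (p ^ e')).
Proof.
move=> /subnK <-; elim: (e' - e)%N => [|k IHk] // Ie.
by rewrite addSn expnS mulnC exprM; apply/frob_pow_pcharX/IHk.
Qed.

Lemma frob_pow_frob_closure e r :
  frob_pow I (p ^ e) (r ^+ (p ^ e)) -> frob_closure p I r.
Proof. by move=> Ie; exists e => e' le_e_e'; apply: frob_pow_pchar_expn Ie. Qed.

End FrobeniusPowers.

Section UltrapowerIdeals.
Variables (R : comNzRingType) (F : npuf).
Implicit Types (a b : nat -> R) (J : nat -> R -> Prop).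

Lemma ulim_surj (x : ultrapower R F) : exists a, x = ulim F a.
Proof. by exists (repr x); rewrite /ulim reprK. Qed.

Lemma ulimD a b : ulim F (a + b : seqR R) = ulim F a + ulim F b.
Proof. exact: rmorphD. Qed.

Lemma ulimM a b : ulim F (a * b : seqR R) = ulim F a * ulim F b.
Proof. exact: rmorphM. Qed.

Lemma ulimX a k : ulim F (a ^+ k : seqR R) = ulim F a ^+ k.
Proof. exact: rmorphXn. Qed.

Lemma ulim_eq_ae a b : ulim F a = ulim F b -> F (fun n => a n = b n).
Proof.
move=> /eqP; rewrite -Quotient.idealrBE => /asboolP Fab.
by apply: (uf_up Fab) => n /eqP; rewrite subr_eq0 => /eqP.
Qed.

Lemma mem_ulim_ideal J a : ulim_ideal F J (ulim F a) <-> F (fun n => J n (a n)).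
Proof.
split; last by exists a.
move=> [b [/ulim_eq_ae Fab FJb]].
by apply: (uf_up (uf_cap Fab FJb)) => n [-> ].
Qed.

Lemma ulim_ideal_is_ideal J : (forall n, is_ideal (J n)) -> is_ideal (ulim_ideal F J).
Proof.
move=> idealJ; split.
  have -> : 0 = ulim F (0 : seqR R) by rewrite /ulim rmorph0.
  apply/mem_ulim_ideal.
  by apply: (uf_up (uf_full F)) => n _; case: (idealJ n).
split.
  move=> _ _ [a [-> FJa]] [b [-> FJb]]; rewrite -ulimD; apply/mem_ulim_ideal.
  apply: (uf_up (uf_cap FJa FJb)) => n [Ja Jb].
  by case: (idealJ n) => _ [JD _]; apply: JD.
move=> c _ [a [-> FJa]]; have [b ->] := ulim_surj c.
rewrite -ulimM; apply/mem_ulim_ideal.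
by apply: (uf_up FJa) => n Ja; case: (idealJ n) => _ [_ JM]; apply: JM.
Qed.

Lemma frob_pow_ulim_ideal (I : nat -> R -> Prop) q x :
  frob_pow (ulim_ideal F I) q x -> ulim_ideal F (fun n => frob_pow (I n) q) x.
Proof.
apply: ideal_span_min.
  by apply: ulim_ideal_is_ideal => n; apply: ideal_span_is_ideal.
move=> _ [_ [[a [-> FIa]] ->]]; rewrite -ulimX; apply/mem_ulim_ideal.
by apply: (uf_up FIa) => n Ia; rewrite exprfctE; apply: ideal_span_sub; exists (a n).
Qed.

End UltrapowerIdeals.

Theorem lemma4p3 (R : comNzRingType) (p N : nat) (I : nat -> R -> Prop) (F : npuf) :
  noetherian R ->
  p \in [pchar R] ->
  (forall n, generated_by_N N (I n)) ->
  forall x : ultrapower R F,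
    frob_closure p (ulim_ideal F I) x ->
    ulim_ideal F (fun n => frob_closure p (I n)) x.
Proof.
move=> _ pchar_p _ x; have [a ->] := ulim_surj x; case=> e0 Fx.
have := frob_pow_ulim_ideal (Fx e0 (leqnn e0)).
rewrite -ulimX => /mem_ulim_ideal FIa.
apply/mem_ulim_ideal; apply: (uf_up FIa) => n.
rewrite exprfctE; exact: frob_pow_frob_closure.
Qed.
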